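(* Let $t$ and $i$ be integers with $t \geq 1$, $0 \leq i < t$ and $t > 16i^{2} - i$. Let $H$ be a Hadamard matrix of order $4t+4i$, and let $M$ be the $(4t+4i) \times 4t$ matrix obtained from $H$ by deleting any $4i$ of its columns. Let $r_1, \dots, r_{4t+4i}$ be the rows of $M$, put $r_{4t+4i+j} = -r_j$ for $1 \leq j \leq 4t+4i$, and let $C_M = \{ \tfrac{1}{2}(r_j + \underline{1}) : 1 \leq j \leq 8t+8i\} \subseteq \{0,1\}^{4t}$, where $\underline{1}$ is the all-ones vector of length $4t$. Then the binary code $C_M$ is maximal: for every $v \in \{0,1\}^{4t} \setminus C_M$, the code $C_M \cup \{v\}$ has strictly smaller minimum distance than $C_M$.
   Context: A Hadamard matrix of order $n$ is an $n \times n$ matrix $H$ with entries in $\{\pm 1\}$ satisfying $HH^{\top} = nI_n$. A binary code of length $m$ is a subset of $\{0,1\}^m$; its minimum distance is the minimum Hamming distance between two distinct codewords. A code is called maximal if including any additional word as a codeword necessarily decreases the minimum distance. *)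

From HB Require Import structures.
From mathcomp Require Import all_boot all_order all_algebra.
Set Implicit Arguments. Unset Strict Implicit. Unset Printing Implicit Defensive.
Import Order.TTheory GRing.Theory Num.Theory.

Local Open Scope ring_scope.

Definition hadamard (n : nat) (H : 'M[int]_n) : Prop :=
  (forall a b, H a b = 1 \/ H a b = -1) /\ H *m H^T = (n%:R)%:M.

(* Binary words of length m: {0,1}^m, with true = 1, false = 0. *)
Definition word (m : nat) := {ffun 'I_m -> bool}.

Definition hdist (m : nat) (x y : word m) : nat := #|[set k | x k != y k]|.

(* Minimum distance of a code: minimum of hdist over pairs of distinct
   codewords.  The neutral value m.+1 (larger than any distance) is only
   returned when the code has fewer than two codewords. *)
Definition min_dist (m : nat) (C : {set word m}) : nat :=
  \big[minn/m.+1]_(x in C) \big[minn/m.+1]_(y in C | y != x) hdist x y.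

Definition maximal_code (m : nat) (C : {set word m}) : Prop :=
  forall v : word m, v \notin C -> (min_dist (v |: C) < min_dist C)%N.

(* The binary word (r + 1)/2 associated with a (+1/-1) vector r. *)
Definition pm_to_word (m : nat) (r : 'I_m -> int) : word m :=
  [ffun k => r k == 1].

(* C_M for M the matrix whose columns are the columns f 0, ..., f (m-1) of H:
   rows r_j of M together with their negatives -r_j, mapped by r |-> (r+1)/2. *)
Definition code_of (n m : nat) (H : 'M[int]_n) (f : 'I_m -> 'I_n) : {set word m} :=
  [set pm_to_word (fun k => H j (f k)) | j : 'I_n] :|:
  [set pm_to_word (fun k => - H j (f k)) | j : 'I_n].

(* The +-1 correlation of two words of length m is corr x y = m - 2 d(x, y).  Two distinct
   codewords of C_M have correlation at most 4i: the rows of H are orthogonal, and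
   deleting 4i columns moves an inner product by at most 4i (for a row and its
   negative the correlation is even <= 0).  Conversely, extend any word v by +-1
   entries to a vector w of length n = 4t + 4i; since H^T H = n I the vector H w has
   squared norm n^2, so some entry a_j satisfies a_j^2 >= n > 64 i^2, i.e.
   |a_j| > 8i.  Dropping the 4i extra coordinates, v has correlation > 4i with row j
   of M or with its negative, hence is strictly closer to that codeword than any
   two codewords are to each other. *)
From mathcomp Require Import all_boot all_order all_algebra zify.
Set Implicit Arguments. Unset Strict Implicit. Unset Printing Implicit Defensive.
Import Order.TTheory GRing.Theory Num.Theory.

Lemma bigminn_le (I : finType) (P : pred I) (F : I -> nat) d j :
  P j -> (\big[minn/d]_(i | P i) F i <= F j)%N.
Proof.
move=> Pj; rewrite unlock.
have : j \in index_enum I by rewrite mem_index_enum.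
elim: (index_enum I) => //= a s IHs; rewrite inE => /orP[/eqP<-|js].
  by rewrite Pj geq_minl.
by case: (P a); rewrite ?geq_min IHs ?orbT.
Qed.

Lemma bigminn_gt (I : finType) (P : pred I) (F : I -> nat) d K :
  (K < d)%N -> (forall i, P i -> K < F i)%N -> (K < \big[minn/d]_(i | P i) F i)%N.
Proof. by move=> Kd KF; elim/big_ind: _ => // x y Kx Ky; rewrite leq_min Kx Ky. Qed.

Section MinimumDistance.

Variable m : nat.
Implicit Types (C : {set word m}) (x y : word m).

Lemma hdist_le x y : (hdist x y <= m)%N.
Proof. by rewrite /hdist (leq_trans (max_card _)) ?card_ord. Qed.

Lemma min_dist_le C x y : x \in C -> y \in C -> y != x ->
  (min_dist C <= hdist x y)%N.
Proof.
move=> xC yC yx; apply: leq_trans (bigminn_le _ _ xC) _.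
by apply: bigminn_le; rewrite yC.
Qed.

Lemma min_dist_gt C K : (K <= m)%N ->
  (forall x y, x \in C -> y \in C -> y != x -> K < hdist x y)%N ->
  (K < min_dist C)%N.
Proof.
move=> Km KC; apply: bigminn_gt => // x xC.
by apply: bigminn_gt => // y /andP[yC yx]; apply: KC.
Qed.

End MinimumDistance.

Local Open Scope ring_scope.

Definition pm_of_word m (x : word m) (k : 'I_m) : int := if x k then 1 else -1.

Definition corr m (x y : word m) : int := \sum_k pm_of_word x k * pm_of_word y k.

Lemma pm_of_word_pm m (x : word m) k : pm_of_word x k = 1 \/ pm_of_word x k = -1.
Proof. by rewrite /pm_of_word; case: (x k); auto. Qed.

Lemma pm_to_wordK m (r : 'I_m -> int) k :
  r k = 1 \/ r k = -1 -> pm_of_word (pm_to_word r) k = r k.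
Proof. by rewrite /pm_of_word ffunE; case=> ->. Qed.

Lemma corrC m (x y : word m) : corr x y = corr y x.
Proof. by apply: eq_bigr => k _; rewrite mulrC. Qed.

Lemma corr_hdist m (x y : word m) : corr x y = m%:R - 2 * (hdist x y)%:R.
Proof.
have pm_mul k : pm_of_word x k * pm_of_word y k = 1 - 2 * (if x k != y k then 1 else 0).
  by rewrite /pm_of_word; case: (x k); case: (y k).
rewrite /corr (eq_bigr _ (fun k _ => pm_mul k)) sumrB sumr_const card_ord -mulr_sumr.
by rewrite -big_mkcond /= sumr_const /hdist cardsE.
Qed.

Lemma hdist_lt_corr m (x y u v : word m) :
  corr x y < corr u v -> (hdist u v < hdist x y)%N.
Proof. by rewrite !corr_hdist -ltz_nat; lia. Qed.

Lemma maximal_code_corr m (C : {set word m}) (b : int) :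
  (forall x y, x \in C -> y \in C -> x != y -> corr x y <= b) ->
  (forall v, exists2 c, c \in C & b < corr c v) ->
  maximal_code C.
Proof.
move=> corrC_le corr_gt v vC; have [c cC bc] := corr_gt v.
have cv : c != v by apply: contraNneq vC => <-.
apply: (@leq_ltn_trans (hdist v c)).
  by apply: min_dist_le; rewrite ?setU11 ?setU1r.
apply: min_dist_gt => [|x y xC yC yx]; first exact: hdist_le.
apply: hdist_lt_corr; rewrite [corr v c]corrC.
by apply: le_lt_trans bc; apply: corrC_le; rewrite // eq_sym.
Qed.

Lemma trmx_mul_scalar n (H : 'M[int]_n) (c : int) :
  c != 0 -> H *m H^T = c%:M -> H^T *m H = c%:M.
Proof.
move=> c0 HHT; pose K := map_mx (intr : int -> rat) H.
have KKT : K *m K^T = (c%:~R)%:M by rewrite /K map_trmx -map_mxM HHT map_scalar_mx.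
have : K *m ((c%:~R : rat)^-1 *: K^T) = 1%:M.
  by rewrite -scalemxAr KKT scale_scalar_mx mulVf ?intr_eq0.
move/mulmx1C; rewrite -scalemxAl => /(congr1 (fun M => (c%:~R : rat) *: M)).
rewrite scalerA mulfV ?intr_eq0 // scale1r scalemx1 => KTK.
apply/matrixP => a b; have := congr1 (fun M : 'M[rat]_n => M a b) KTK.
rewrite /K map_trmx -map_mxM !mxE.
case: (a == b); first by rewrite !mulr1n => /intr_inj.
by rewrite !mulr0n => /eqP; rewrite intr_eq0 => /eqP.
Qed.

Lemma norm_sum_sub_sum_image_le n m (f : 'I_m -> 'I_n) (g : 'I_n -> int) :
  injective f -> (forall c, `|g c| <= 1) ->
  `|\sum_c g c - \sum_k g (f k)| <= (n - m)%N%:R.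
Proof.
move=> f_inj g_le1.
rewrite (bigID (mem (f @: setT))) /= big_imset /=; last by move=> a b _ _ /f_inj.
rewrite (eq_bigl predT) => [|k]; last by rewrite in_setT.
rewrite addrC addrK; apply: le_trans (ler_norm_sum _ _ _) _.
apply: le_trans (ler_sum _ (fun c _ => g_le1 c)) _.
have card_compl : #|~: (f @: setT)| = (n - m)%N.
  by have := cardsC (f @: setT); rewrite card_imset // cardsT !card_ord; lia.
rewrite sumr_const ler_nat -card_compl; apply/eq_leq/eq_card => c.
by rewrite in_setC.
Qed.

Lemma exists_pm_extension n m (f : 'I_m -> 'I_n) (r : 'I_m -> int) :
  injective f -> (forall k, r k = 1 \/ r k = -1) ->
  exists2 w : 'I_n -> int, forall c, w c = 1 \/ w c = -1 & forall k, w (f k) = r k.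
Proof.
move=> f_inj r_pm; exists (fun c => if [pick k | f k == c] is Some k then r k else 1).
  by move=> c; case: pickP => *; [exact: r_pm | left].
by move=> k; case: pickP => [k' /eqP /f_inj -> | /(_ k)] //; rewrite eqxx.
Qed.

Lemma norm_gt_of_near (a s d : int) :
  4 * d ^+ 2 < a ^+ 2 -> `|a - s| <= d -> d < `|s|.
Proof. by rewrite ler_norml ltr_normr => ? /andP[? ?]; apply/orP; nia. Qed.

Section HadamardCode.

Variables (n m : nat) (H : 'M[int]_n) (f : 'I_m -> 'I_n).
Hypotheses (H_pm : forall a b, H a b = 1 \/ H a b = -1) (HHT : H *m H^T = n%:R%:M).
Hypothesis f_inj : injective f.

Definition row_word (j : 'I_n) (e : bool) : word m :=
  pm_to_word (fun k => (-1) ^+ e * H j (f k)).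

Definition trunc_dot (j l : 'I_n) : int := \sum_k H j (f k) * H l (f k).

Lemma code_ofP x : x \in code_of H f -> exists j e, x = row_word j e.
Proof.
rewrite inE => /orP[] /imsetP[j _ ->]; exists j; [exists false | exists true];
  by apply/ffunP => k; rewrite !ffunE /= ?expr0 ?expr1 ?mul1r ?mulN1r.
Qed.

Lemma row_word_code j e : row_word j e \in code_of H f.
Proof.
rewrite inE; case: e; apply/orP; [right | left]; apply/imsetP; exists j => //;
  by apply/ffunP => k; rewrite !ffunE /= ?expr0 ?expr1 ?mulN1r ?mul1r.
Qed.

Lemma pm_of_row_word j e k : pm_of_word (row_word j e) k = (-1) ^+ e * H j (f k).
Proof. by apply: pm_to_wordK; case: e; case: (H_pm j (f k)) => ->; auto. Qed.

Lemma corr_row_word j e l e' :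
  corr (row_word j e) (row_word l e') = (-1) ^+ e * (-1) ^+ e' * trunc_dot j l.
Proof.
by rewrite /trunc_dot mulr_sumr; apply: eq_bigr => k _; rewrite !pm_of_row_word mulrACA.
Qed.

Lemma row_dot j l : \sum_c H j c * H l c = n%:R *+ (j == l).
Proof.
have := congr1 (fun M : 'M[int]_n => M j l) HHT; rewrite !mxE => <-.
by apply: eq_bigr => c _; rewrite mxE.
Qed.

Lemma norm_pm_mul (a b : int) : a = 1 \/ a = -1 -> b = 1 \/ b = -1 -> `|a * b| <= 1.
Proof. by case=> ->; case=> ->. Qed.

Lemma norm_trunc_dot_le j l : j != l -> `|trunc_dot j l| <= (n - m)%N%:R.
Proof.
move=> jl; have := row_dot j l; rewrite (negbTE jl) mulr0n => dot0.
rewrite -normrN -[- _]add0r -dot0.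
exact: norm_sum_sub_sum_image_le (fun c => norm_pm_mul (H_pm j c) (H_pm l c)).
Qed.

Lemma trunc_dot_ge0 j : 0 <= trunc_dot j j.
Proof. by apply: sumr_ge0 => k _; case: (H_pm j (f k)) => ->. Qed.

Lemma corr_code_le x y : x \in code_of H f -> y \in code_of H f -> x != y ->
  corr x y <= (n - m)%N%:R.
Proof.
move=> /code_ofP[j [e ->]] /code_ofP[l [e' ->]]; rewrite corr_row_word.
have [<- | jl] := eqVneq j l => [|_].
  case: (eqVneq e e') => [-> | ee']; first by rewrite eqxx.
  have -> : (-1) ^+ e * (-1) ^+ e' = -1 :> int by move: ee'; case: e; case: e'.
  by rewrite mulN1r => _; apply: le_trans (ler0n _ _); rewrite oppr_le0 trunc_dot_ge0.
apply: le_trans (ler_norm _) _; rewrite -exprD normrM normrX normrN1 expr1n mul1r.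
exact: norm_trunc_dot_le.
Qed.

(* Parseval: H^T H = n I, so H w has squared norm n |w|^2 = n^2. *)
Lemma sum_sqr_mul_hadamard (w : 'I_n -> int) : (0 < n)%N ->
  (forall c, w c = 1 \/ w c = -1) ->
  \sum_j (\sum_c H j c * w c) ^+ 2 = n%:R ^+ 2.
Proof.
move=> n_gt0 w_pm; pose W : 'cV[int]_n := \col_c w c.
have HTH : H^T *m H = n%:R%:M.
  by apply: trmx_mul_scalar HHT; rewrite pnatr_eq0 -lt0n.
have sqr_HW : ((H *m W)^T *m (H *m W)) 0 0 = \sum_j (\sum_c H j c * w c) ^+ 2.
  rewrite mxE; apply: eq_bigr => j _; rewrite !mxE expr2.
  by congr (_ * _); apply: eq_bigr => c _; rewrite mxE.
rewrite -sqr_HW trmx_mul -mulmxA (mulmxA H^T) HTH mul_scalar_mx -scalemxAr.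
rewrite mxE expr2; congr (_ * _); rewrite mxE (eq_bigr (fun _ => 1)).
  by rewrite sumr_const card_ord.
by move=> c _; rewrite !mxE; case: (w_pm c) => ->.
Qed.

Lemma exists_large_entry (w : 'I_n -> int) : (0 < n)%N ->
  (forall c, w c = 1 \/ w c = -1) ->
  exists j, n%:R <= (\sum_c H j c * w c) ^+ 2.
Proof.
move=> n_gt0 w_pm; apply/existsP; apply: contraT; rewrite negb_exists => /forallP small.
have : \sum_j (\sum_c H j c * w c) ^+ 2 < \sum_(j : 'I_n) (n%:R : int).
  apply: ltr_sum => [|j _]; last by rewrite ltNge small.
  by apply/hasP; exists (Ordinal n_gt0); rewrite ?mem_index_enum.
by rewrite sum_sqr_mul_hadamard // sumr_const card_ord expr2 mulr_natr ltxx.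
Qed.

Lemma corr_code_gt v : (4 * (n - m) ^ 2 < n)%N ->
  exists2 c, c \in code_of H f & (n - m)%N%:R < corr c v.
Proof.
move=> n_large.
have [w w_pm w_f] := exists_pm_extension f_inj (pm_of_word_pm v).
have [j large] := exists_large_entry (leq_ltn_trans (leq0n _) n_large) w_pm.
pose s := \sum_k H j (f k) * pm_of_word v k.
have corr_v e : corr (row_word j e) v = (-1) ^+ e * s.
  by rewrite /s mulr_sumr; apply: eq_bigr => k _; rewrite pm_of_row_word mulrA.
have near := norm_sum_sub_sum_image_le f_inj (fun c => norm_pm_mul (H_pm j c) (w_pm c)).
rewrite (eq_bigr (fun k => H j (f k) * pm_of_word v k)) in near => [|k _];
  last by rewrite w_f.
have n_large' : 4 * (n - m)%N%:R ^+ 2 < n%:R :> int by rewrite -natrX -natrM ltr_nat.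
have := norm_gt_of_near (lt_le_trans n_large' large) near.
rewrite -/s ltr_normr => /orP[s_pos | s_neg].
- by exists (row_word j false); rewrite ?row_word_code // corr_v mul1r.
- by exists (row_word j true); rewrite ?row_word_code // corr_v mulN1r.
Qed.

Lemma maximal_code_of_hadamard : (4 * (n - m) ^ 2 < n)%N -> maximal_code (code_of H f).
Proof.
move=> n_large; apply: (@maximal_code_corr _ _ (n - m)%N%:R) => [x y | v].
  exact: corr_code_le.
exact: corr_code_gt.
Qed.

End HadamardCode.

Theorem theorem3 (t i : nat) (H : 'M[int]_(4 * t + 4 * i))
    (f : 'I_(4 * t) -> 'I_(4 * t + 4 * i)) :
  (1 <= t)%N -> (i < t)%N -> (16 * i ^ 2 - i < t)%N ->
  hadamard H ->
  {homo f : a b / (a < b)%N} ->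
  maximal_code (code_of H f).
Proof.
move=> t_ge1 _ t_large [H_pm HHT] f_incr.
have f_inj : injective f.
  move=> a b fab; apply/val_inj; case: (ltngtP a b) => // /f_incr;
    by rewrite fab ltnn.
apply: maximal_code_of_hadamard => //; nia.
Qed.
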